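(* Let $k$ be a field and $(R,\mathfrak m_R,k)$, $(S,\mathfrak m_S,k)$ local rings containing $k$, each with residue field $k$. Let $\mathfrak m=\mathfrak m_R\otimes_kS+R\otimes_k\mathfrak m_S\subset R\otimes_kS$. Let $M$ be an $R$-module and $N$ an $S$-module. If $(M\otimes_kN)_{\mathfrak m}$ has a free summand as an $(R\otimes_kS)_{\mathfrak m}$-module, then $M$ has a free summand as an $R$-module and $N$ has a free summand as an $S$-module.
   Context: A module over a ring $T$ has a free summand if it has a direct summand isomorphic to $T$. *)

From HB Require Import structures.
From mathcomp Require Import all_boot all_order all_algebra.
Set Implicit Arguments. Unset Strict Implicit. Unset Printing Implicit Defensive.
Import GRing.Theory.
Local Open Scope ring_scope.

Definition is_unit (T : pzRingType) (x : T) : Prop := exists y : T, x * y = 1.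
Definition nonunit (T : pzRingType) (x : T) : Prop := ~ is_unit x.

(* (R, m_R, k) is a local ring with residue field k, R a commutative k-algebra:
   1 <> 0, the non-units form an ideal m_R (closure under addition suffices in a
   commutative ring), and k -> R/m_R is onto. *)
Definition local_resk (k : fieldType) (R : comAlgType k) : Prop :=
  (1 : R) <> 0 /\
  (forall x y : R, nonunit x -> nonunit y -> nonunit (x + y)) /\
  (forall r : R, exists c : k, nonunit (r - c%:A)).

(* T has a free summand: a direct summand isomorphic to T, i.e. T-linear
   maps f : T -> M and g : M -> T with g \o f = id. *)
Definition has_free_summand (T : pzRingType) (M : lmodType T) : Prop :=
  exists (f : T -> M) (g : M -> T),
    (forall a u v : T, f (a * u + v) = a *: f u + f v) /\
    (forall (a : T) (x y : M), g (a *: x + y) = a * g x + g y) /\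
    (forall t : T, g (f t) = t).

(* B = R (x)_k S, with t r s = r (x) s: t is k-bilinear, multiplicative,
   and universal among k-bilinear maps into k-vector spaces. *)
Definition is_tensor_alg (k : fieldType) (R S B : comAlgType k)
    (t : R -> S -> B) : Prop :=
  (forall (c : k) (r r' : R) (s : S), t (c *: r + r') s = c *: t r s + t r' s) /\
  (forall (c : k) (r : R) (s s' : S), t r (c *: s + s') = c *: t r s + t r s') /\
  t 1 1 = 1 /\
  (forall (r r' : R) (s s' : S), t r s * t r' s' = t (r * r') (s * s')) /\
  (forall (W : lmodType k) (h : R -> S -> W),
      (forall (c : k) (r r' : R) (s : S), h (c *: r + r') s = c *: h r s + h r' s) ->
      (forall (c : k) (r : R) (s s' : S), h r (c *: s + s') = c *: h r s + h r s') ->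
      exists H : B -> W,
        (forall (c : k) (b b' : B), H (c *: b + b') = c *: H b + H b') /\
        (forall r s, H (t r s) = h r s) /\
        (forall H' : B -> W,
            (forall (c : k) (b b' : B), H' (c *: b + b') = c *: H' b + H' b') ->
            (forall r s, H' (t r s) = h r s) -> forall b, H' b = H b)).

(* the ideal m = m_R (x) S + R (x) m_S of R (x)_k S, i.e. the set of finite
   sums of pure tensors r (x) s with r in m_R or s in m_S *)
Definition mideal (k : fieldType) (R S B : comAlgType k) (t : R -> S -> B)
    (b : B) : Prop :=
  exists (n : nat) (r : 'I_n -> R) (s : 'I_n -> S),
    (forall i, nonunit (r i) \/ nonunit (s i)) /\ b = \sum_(i < n) t (r i) (s i).

Definition is_rhom (U V : pzRingType) (f : U -> V) : Prop :=
  f 1 = 1 /\ (forall x y, f (x + y) = f x + f y) /\ (forall x y, f (x * y) = f x * f y).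

Definition is_localization (B A : comPzRingType) (P : B -> Prop) (iota : B -> A)
    : Prop :=
  is_rhom iota /\ (forall b, ~ P b -> is_unit (iota b)) /\
  (forall (C : comPzRingType) (phi : B -> C),
      is_rhom phi -> (forall b, ~ P b -> is_unit (phi b)) ->
      exists psi : A -> C, is_rhom psi /\ (forall b, psi (iota b) = phi b) /\
        (forall psi' : A -> C, is_rhom psi' -> (forall b, psi' (iota b) = phi b) ->
           forall a, psi' a = psi a)).

(* Q = M (x)_k N as a module over B = R (x)_k S, with tau x y = x (x) y:
   tau is k-bilinear, (r (x) s) . (x (x) y) = (r x) (x) (s y), and tau is
   universal among k-bilinear maps into k-vector spaces.  The k-structures on
   M, N, Q are those induced by k -> R, k -> S, k -> B. *)
Definition is_tensor_mod (k : fieldType) (R S B : comAlgType k)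
    (t : R -> S -> B) (M : lmodType R) (N : lmodType S) (Q : lmodType B)
    (tau : M -> N -> Q) : Prop :=
  (forall (c : k) (x x' : M) (y : N),
      tau ((c%:A : R) *: x + x') y = (c%:A : B) *: tau x y + tau x' y) /\
  (forall (c : k) (x : M) (y y' : N),
      tau x ((c%:A : S) *: y + y') = (c%:A : B) *: tau x y + tau x y') /\
  (forall (r : R) (s : S) (x : M) (y : N), t r s *: tau x y = tau (r *: x) (s *: y)) /\
  (forall (W : lmodType k) (h : M -> N -> W),
      (forall (c : k) (x x' : M) (y : N),
          h ((c%:A : R) *: x + x') y = c *: h x y + h x' y) ->
      (forall (c : k) (x : M) (y y' : N),
          h x ((c%:A : S) *: y + y') = c *: h x y + h x y') ->
      exists H : Q -> W,
        (forall (c : k) (q q' : Q), H ((c%:A : B) *: q + q') = c *: H q + H q') /\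
        (forall x y, H (tau x y) = h x y) /\
        (forall H' : Q -> W,
            (forall (c : k) (q q' : Q), H' ((c%:A : B) *: q + q') = c *: H' q + H' q') ->
            (forall x y, H' (tau x y) = h x y) -> forall q, H' q = H q)).

(* lambda : Q -> P is the localization of the B-module Q along iota : B -> A,
   i.e. P = Q (x)_B A (universal property among A-modules). *)
Definition is_mod_localization (B A : comPzRingType) (iota : B -> A)
    (Q : lmodType B) (P : lmodType A) (lambda : Q -> P) : Prop :=
  (forall (b : B) (q q' : Q), lambda (b *: q + q') = iota b *: lambda q + lambda q') /\
  (forall (W : lmodType A) (h : Q -> W),
      (forall (b : B) (q q' : Q), h (b *: q + q') = iota b *: h q + h q') ->
      exists H : P -> W,
        (forall (a : A) (p p' : P), H (a *: p + p') = a *: H p + H p') /\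
        (forall q, H (lambda q) = h q) /\
        (forall H' : P -> W,
            (forall (a : A) (p p' : P), H' (a *: p + p') = a *: H' p + H' p') ->
            (forall q, H' (lambda q) = h q) -> forall p, H' p = H p)).

From HB Require Import structures.
From mathcomp Require Import all_boot all_order all_algebra.
From mathcomp Require Import ring.
From Stdlib Require Import ClassicalEpsilon Classical.
Set Implicit Arguments. Unset Strict Implicit. Unset Printing Implicit Defensive.
Import GRing.Theory.
Local Open Scope ring_scope.

(* The residue map of R makes r (x) s |-> (residue r) s a ring map R (x)_k S -> S
   which sends every element outside m to a unit, hence extends to the localization A.
   Given a splitting (f, g) of A off P, pushing y |-> g (x (x) y) to S gives S-linear
   maps N -> S; if N has no free summand these all take values in m_S, so the residue
   of g vanishes on the image of Q and therefore on all of P, contradicting g (f 1) = 1.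
   The statement for M follows by exchanging the roles of R and S. *)

Section LinearFor.
Variables (T : pzRingType) (U : lmodType T) (V : zmodType).
Variables (s : T -> V -> V) (f : U -> V).
Hypotheses (s1 : forall v, s 1 v = v) (f_lin : linear_for s f).

Lemma linear_for0 : f 0 = 0.
Proof.
have f00 : f 0 = f 0 + f 0 by rewrite -{1}(addr0 (0 : U)) -{1}(scale1r (0 : U)) f_lin s1.
by apply: (addrI (f 0)); rewrite addr0 -f00.
Qed.

Lemma linear_forZ a u : f (a *: u) = s a (f u).
Proof. by rewrite -[a *: u]addr0 f_lin linear_for0 addr0. Qed.

Lemma linear_forD u v : f (u + v) = f u + f v.
Proof. by rewrite -{1}(scale1r u) f_lin s1. Qed.

Lemma linear_for_sum I (r : seq I) (F : I -> U) :
  f (\sum_(i <- r) F i) = \sum_(i <- r) f (F i).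
Proof. exact: (big_morph f linear_forD linear_for0). Qed.

End LinearFor.

Section Nonunit.
Variable T : comPzRingType.

Lemma nonunitN (x : T) : nonunit x -> nonunit (- x).
Proof. by move=> nx [y xy]; apply: nx; exists (- y); rewrite -xy mulrN mulNr. Qed.

Lemma nonunitMl (x y : T) : nonunit x -> nonunit (y * x).
Proof. by move=> nx [z xz]; apply: nx; exists (y * z); rewrite mulrCA mulrA. Qed.

Lemma nonunit0 : (1 : T) <> 0 -> nonunit (0 : T).
Proof. by move=> T1 [z]; rewrite mul0r => /esym. Qed.

Lemma free_summand_of_unit_value (V : lmodType T) (g : V -> T) (v : V) :
  scalar g -> is_unit (g v) -> has_free_summand V.
Proof.
move=> g_lin [w gvw]; exists (fun a => (a * w) *: v), g; split; [|split] => //.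
  by move=> a u u'; rewrite mulrDl scalerDl scalerA mulrA.
by move=> a; rewrite (linear_forZ (@mul1r T) g_lin) -mulrA (mulrC w) gvw mulr1.
Qed.

End Nonunit.

Lemma algM (k : pzRingType) (R : comAlgType k) (a b : k) :
  (a * b)%:A = a%:A * b%:A :> R.
Proof. by rewrite mulr_algl scalerA. Qed.

Section Residue.
Variables (k : fieldType) (R : comAlgType k) (hR : local_resk R).

Definition residue (r : R) : k :=
  projT1 (constructive_indefinite_description _ (proj2 (proj2 hR) r)).

Lemma residueP r : nonunit (r - (residue r)%:A).
Proof. exact: projT2 (constructive_indefinite_description _ (proj2 (proj2 hR) r)). Qed.

Lemma nonunitD (x y : R) : nonunit x -> nonunit y -> nonunit (x + y).
Proof. exact: (proj1 (proj2 hR)). Qed.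

Lemma residue_unique r c : nonunit (r - c%:A) -> residue r = c.
Proof.
move=> nrc; apply/eqP; apply: contraT => neq; exfalso.
have : nonunit ((residue r - c)%:A : R).
  have -> : ((residue r - c)%:A : R) = (r - c%:A) - (r - (residue r)%:A).
    by rewrite scalerBl; ring.
  by apply: nonunitD => //; apply/nonunitN/residueP.
apply; exists ((residue r - c)^-1)%:A.
by rewrite -algM mulfV ?scale1r // subr_eq0.
Qed.

Lemma residue_linear : scalar residue.
Proof.
move=> c r r'; apply: residue_unique.
have -> : (c *: r + r') - (c * residue r + residue r')%:A =
          c%:A * (r - (residue r)%:A) + (r' - (residue r')%:A).
  by rewrite -[c *: r]mulr_algl scalerDl algM; ring.
by apply: nonunitD; [apply/nonunitMl/residueP | apply: residueP].
Qed.

Lemma residueD r r' : residue (r + r') = residue r + residue r'.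
Proof. exact: (linear_forD (@mul1r k) residue_linear). Qed.

Lemma residueM r r' : residue (r * r') = residue r * residue r'.
Proof.
apply: residue_unique.
have -> : r * r' - (residue r * residue r')%:A =
          r' * (r - (residue r)%:A) + (residue r)%:A * (r' - (residue r')%:A).
  by rewrite algM; ring.
by apply: nonunitD; apply/nonunitMl/residueP.
Qed.

Lemma residue_nonunit r : nonunit r -> residue r = 0.
Proof. by move=> nr; apply: residue_unique; rewrite scale0r subr0. Qed.

Lemma residue_alg c : residue c%:A = c.
Proof. by apply: residue_unique; rewrite subrr; apply: nonunit0; case: hR. Qed.

Lemma residue1 : residue 1 = 1.
Proof. by rewrite -(scale1r (1 : R)) residue_alg. Qed.

End Residue.

Record submod_pred (T : pzRingType) (V : lmodType T) := SubmodPred {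
  submod_mem :> V -> Prop;
  submod_mem0 : submod_mem 0;
  submod_mem_lin : forall a x y, submod_mem x -> submod_mem y -> submod_mem (a *: x + y)
}.

Section SubmoduleOfPred.
Variables (T : pzRingType) (V : lmodType T) (C : submod_pred V).

Definition submod_memb (v : V) : bool := if excluded_middle_informative (C v) then true else false.

Lemma submod_membP v : reflect (C v) (submod_memb v).
Proof. by rewrite /submod_memb; case: excluded_middle_informative => Cv; constructor. Qed.

Record submod_of := SubmodOf { submod_val : V; submod_valP : submod_memb submod_val }.
HB.instance Definition _ := [isSub for submod_val].
HB.instance Definition _ := [Choice of submod_of by <:].

Lemma submod_memb_closed : GRing.submod_closed submod_memb.
Proof.
split; first exact/submod_membP/submod_mem0.
by move=> a u v /submod_membP Cu /submod_membP Cv; apply/submod_membP/submod_mem_lin.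
Qed.

HB.instance Definition _ :=
  GRing.SubChoice_isSubLmodule.Build T V submod_memb submod_of submod_memb_closed.

Definition in_submod (v : V) (Cv : C v) : submod_of := SubmodOf (introT (submod_membP v) Cv).

Lemma submod_valC (x : submod_of) : C (submod_val x).
Proof. exact/submod_membP/submod_valP. Qed.

End SubmoduleOfPred.

Section TensorAlgebra.
Variables (k : fieldType) (R S B : comAlgType k) (t : R -> S -> B).
Hypothesis ht : is_tensor_alg t.

Lemma tensor_alg_linearl s : linear (fun r => t r s).
Proof. by case: ht => tl _ c r r'; apply: tl. Qed.

Lemma tensor_alg_linearr r : linear (t r).
Proof. by case: ht => _ [tr _] c s s'; apply: tr. Qed.

Lemma tensor_alg_ext (W : lmodType k) (H1 H2 : B -> W) :
  linear H1 -> linear H2 -> (forall r s, H1 (t r s) = H2 (t r s)) -> H1 =1 H2.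
Proof.
case: ht => tl [tr [_ [_ tUP]]] H1_lin H2_lin e.
have [H [_ [_ Huniq]]] := tUP W (fun r s => H1 (t r s))
  (fun c r r' s => etrans (f_equal H1 (tl c r r' s)) (H1_lin _ _ _))
  (fun c r s s' => etrans (f_equal H1 (tr c r s s')) (H1_lin _ _ _)).
by move=> b; rewrite (Huniq H1) // (Huniq H2).
Qed.

Lemma tensor_alg_ind (C : B -> Prop) :
  (forall c x y, C x -> C y -> C (c *: x + y)) -> (forall r s, C (t r s)) ->
  forall b, C b.
Proof.
move=> C_lin Ct.
have C0 : C 0 by rewrite -(addNr (t 1 1)) -scaleN1r; apply: C_lin.
case: ht => tl [tr [_ [_ tUP]]].
pose h r s := in_submod (C := SubmodPred C0 C_lin) (Ct r s).
have h_linl c r r' s : h (c *: r + r') s = c *: h r s + h r' s by apply/val_inj/tl.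
have h_linr c r s s' : h r (c *: s + s') = c *: h r s + h r s' by apply/val_inj/tr.
have [H [H_lin [Ht _]]] := tUP _ h h_linl h_linr.
have valH : val \o H =1 id.
  apply: tensor_alg_ext => [c x y | // | r s] /=; first by rewrite H_lin.
  by rewrite Ht.
by move=> b; rewrite -(valH b); exact: submod_valC (H b).
Qed.

Lemma tensor_alg_sum b : exists rs : seq (R * S), b = \sum_(p <- rs) t p.1 p.2.
Proof.
elim/tensor_alg_ind: b => [c _ _ [rs1 ->] [rs2 ->] | r s].
  exists ([seq (c *: p.1, p.2) | p <- rs1] ++ rs2).
  rewrite big_cat big_map scaler_sumr /=; congr (_ + _); apply: eq_bigr => p _.
  by rewrite (linear_forZ (@scale1r _ _) (tensor_alg_linearl p.2)).
by exists [:: (r, s)]; rewrite big_seq1.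
Qed.

Lemma tensor_alg_alg (c : k) : c%:A = t 1 c%:A.
Proof.
case: ht => _ [_ [t11 _]].
by rewrite (linear_forZ (@scale1r _ _) (tensor_alg_linearr 1)) t11.
Qed.

Lemma mideal_seq (rs : seq (R * S)) :
  {in rs, forall p, nonunit p.1 \/ nonunit p.2} -> mideal t (\sum_(p <- rs) t p.1 p.2).
Proof.
move=> rs_m; pose p_ (i : 'I_(size rs)) := nth (0, 0) rs i.
exists (size rs), (fun i => (p_ i).1), (fun i => (p_ i).2); split.
  by move=> i; apply/rs_m/mem_nth.
by rewrite (big_nth (0, 0)) big_mkord.
Qed.

End TensorAlgebra.

Lemma tensor_mod_ext (k : fieldType) (R S B : comAlgType k)
    (t : R -> S -> B) (M : lmodType R) (N : lmodType S) (Q : lmodType B)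
    (tau : M -> N -> Q) (W : lmodType k) (H1 H2 : Q -> W) :
  is_tensor_mod t tau ->
  (forall (c : k) (q q' : Q), H1 ((c%:A : B) *: q + q') = c *: H1 q + H1 q') ->
  (forall (c : k) (q q' : Q), H2 ((c%:A : B) *: q + q') = c *: H2 q + H2 q') ->
  (forall x y, H1 (tau x y) = H2 (tau x y)) -> H1 =1 H2.
Proof.
case=> tl [tr [_ tUP]] H1_lin H2_lin e.
have [H [_ [_ Huniq]]] := tUP W (fun x y => H1 (tau x y))
  (fun c x x' y => etrans (f_equal H1 (tl c x x' y)) (H1_lin _ _ _))
  (fun c x y y' => etrans (f_equal H1 (tr c x y y')) (H1_lin _ _ _)).
by move=> q; rewrite (Huniq H1) // (Huniq H2).
Qed.

Lemma tensor_mod_linearr (k : fieldType) (R S B : comAlgType k) (t : R -> S -> B)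
    (M : lmodType R) (N : lmodType S) (Q : lmodType B) (tau : M -> N -> Q) x :
  is_tensor_mod t tau -> linear_for (fun s q => t 1 s *: q) (tau x).
Proof.
case=> _ [tr [tM _]] s y y'.
by have := tr 1 x (s *: y) y'; rewrite !scale1r => ->; rewrite tM scale1r.
Qed.

Section ModLocalization.
Variables (B A : comPzRingType) (iota : B -> A) (Q : lmodType B) (P : lmodType A).
Variable lambda : Q -> P.
Hypothesis hlambda : is_mod_localization iota lambda.

Lemma mod_localization_ext (W : lmodType A) (H1 H2 : P -> W) :
  linear H1 -> linear H2 -> (forall q, H1 (lambda q) = H2 (lambda q)) -> H1 =1 H2.
Proof.
case: hlambda => l_lin lUP H1_lin H2_lin e.
have [H [_ [_ Huniq]]] := lUP W (fun q => H1 (lambda q))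
  (fun b q q' => etrans (f_equal H1 (l_lin b q q')) (H1_lin _ _ _)).
by move=> p; rewrite (Huniq H1) // (Huniq H2).
Qed.

Lemma mod_localization_ind (C : P -> Prop) :
  (forall a x y, C x -> C y -> C (a *: x + y)) -> (forall q, C (lambda q)) ->
  forall p, C p.
Proof.
move=> C_lin Cl.
have C0 : C 0 by rewrite -(addNr (lambda 0)) -scaleN1r; apply: C_lin.
case: hlambda => l_lin lUP.
pose h q := in_submod (C := SubmodPred C0 C_lin) (Cl q).
have h_lin b q q' : h (b *: q + q') = iota b *: h q + h q' by apply/val_inj/l_lin.
have [H [H_lin [Hl _]]] := lUP _ h h_lin.
have valH : val \o H =1 id.
  apply: mod_localization_ext => [a x y | // | q] /=; first by rewrite H_lin.
  by rewrite Hl.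
by move=> p; rewrite -(valH p); exact: submod_valC (H p).
Qed.

End ModLocalization.

Lemma mideal_swap (k : fieldType) (R S B : comAlgType k) (t : R -> S -> B) b :
  mideal (fun s r => t r s) b -> mideal t b.
Proof.
case=> n [s [r [sr_m ->]]]; exists n, r, s; split=> // i.
by case: (sr_m i); [right | left].
Qed.

Section Swap.
Variables (k : fieldType) (R S B : comAlgType k) (t : R -> S -> B).

Lemma is_tensor_alg_swap : is_tensor_alg t -> is_tensor_alg (fun s r => t r s).
Proof.
case=> tl [tr [t11 [tM tUP]]]; do 4!split=> //.
move=> W h hl hr.
have [H [H_lin [Ht Huniq]]] := tUP W (fun r s => h s r)
  (fun c r r' s => hr c s r r') (fun c r s s' => hl c s s' r).
by exists H; do 2!split=> //; move=> H' H'_lin H't; apply: Huniq => // r s; apply: H't.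
Qed.

Lemma is_localization_swap (A : comPzRingType) (iota : B -> A) :
  is_localization (mideal t) iota -> is_localization (mideal (fun s r => t r s)) iota.
Proof.
case=> iota_rhom [iota_unit iotaUP]; split=> //; split.
  by move=> b nb; apply: iota_unit => /(@mideal_swap _ _ _ _ (fun s r => t r s)).
by move=> C phi phi_rhom phi_unit; apply: iotaUP => // b nb; apply: phi_unit => /mideal_swap.
Qed.

Lemma is_tensor_mod_swap (M : lmodType R) (N : lmodType S) (Q : lmodType B)
    (tau : M -> N -> Q) :
  is_tensor_mod t tau -> is_tensor_mod (fun s r => t r s) (fun y x => tau x y).
Proof.
case=> tl [tr [tM tUP]]; split; [|split; [|split]].
- by move=> c y y' x; apply: tr.
- by move=> c y x x'; apply: tl.
- by move=> s r y x; apply: tM.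
move=> W h hl hr.
have [H [H_lin [Ht Huniq]]] := tUP W (fun x y => h y x)
  (fun c x x' y => hr c y x x') (fun c x y y' => hl c y y' x).
by exists H; do 2!split=> //; move=> H' H'_lin H't; apply: Huniq => // x y; apply: H't.
Qed.

End Swap.

Section ResidueTensor.
Variables (k : fieldType) (R S B : comAlgType k) (hR : local_resk R) (t : R -> S -> B).
Hypothesis ht : is_tensor_alg t.
Variable psi : B -> S.
Hypotheses (psi_lin : linear psi) (psi_t : forall r s, psi (t r s) = residue hR r *: s).

Lemma residue_tensor_rhom : is_rhom psi.
Proof.
have [_ [_ [t11 [tM _]]]] := ht.
have psiMt b r s : psi (b * t r s) = psi b * psi (t r s).
  apply: (tensor_alg_ext ht (H1 := fun b => psi (b * t r s))
                            (H2 := fun b => psi b * psi (t r s))) => [c x y|c x y|r' s'] /=.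
  - by rewrite mulrDl -scalerAl psi_lin.
  - by rewrite psi_lin mulrDl scalerAl.
  - by rewrite tM !psi_t residueM -scalerAl -scalerAr scalerA.
split; first by rewrite -t11 psi_t residue1 scale1r.
split; first exact: linear_forD (@scale1r _ _) psi_lin.
move=> b; apply: (tensor_alg_ext ht (H1 := fun b' => psi (b * b'))
                                  (H2 := fun b' => psi b * psi b')) => [c x y|c x y|r s] /=.
- by rewrite mulrDr -scalerAr psi_lin.
- by rewrite psi_lin mulrDr scalerAr.
- exact: psiMt.
Qed.

(* b = \sum_i (r_i - (residue r_i)%:A) (x) s_i + 1 (x) psi b, a sum of pure tensors of m. *)
Lemma mideal_of_nonunit b : nonunit (psi b) -> mideal t b.
Proof.
have [rs ->] := tensor_alg_sum ht b; set b' := \sum_(p <- rs) _ => nb.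
pose rs' := [seq (p.1 - (residue hR p.1)%:A, p.2) | p <- rs] ++ [:: (1, psi b')].
have -> : b' = \sum_(p <- rs') t p.1 p.2.
  rewrite big_cat big_map big_seq1 /= {2}/b' (linear_for_sum (@scale1r _ _) psi_lin).
  rewrite (linear_for_sum (@scale1r _ _) (tensor_alg_linearr ht 1)) -big_split.
  apply: eq_bigr => p _ /=; have t_lin := tensor_alg_linearl ht p.2.
  rewrite psi_t (linear_forZ (@scale1r _ _) (tensor_alg_linearr ht 1)).
  by rewrite -(linear_forZ (@scale1r _ _) t_lin) -(linear_forD (@scale1r _ _) t_lin) subrK.
apply: mideal_seq => p; rewrite mem_cat => /orP[/mapP[q _ ->] | ].
  by left; apply: residueP.
by rewrite mem_seq1 => /eqP ->; right.
Qed.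

Lemma residue_tensor_unit b : ~ mideal t b -> is_unit (psi b).
Proof. by move=> nb; apply: NNPP => /mideal_of_nonunit. Qed.

End ResidueTensor.

Lemma residue_tensor_exists (k : fieldType) (R S B : comAlgType k) (hR : local_resk R)
    (t : R -> S -> B) :
  is_tensor_alg t ->
  exists psi : B -> S, linear psi /\ forall r s, psi (t r s) = residue hR r *: s.
Proof.
case=> _ [_ [_ [_ tUP]]].
have hl c r r' (s : S) : residue hR (c *: r + r') *: s =
                   c *: (residue hR r *: s) + residue hR r' *: s.
  by rewrite residue_linear scalerDl scalerA.
have hr c r (s s' : S) : residue hR r *: (c *: s + s') =
                   c *: (residue hR r *: s) + residue hR r *: s'.
  by rewrite scalerDr !scalerA mulrC.
have [psi [psi_lin [psi_t _]]] := tUP S _ hl hr.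
by exists psi.
Qed.

Lemma residue_localization_exists (k : fieldType) (R S B : comAlgType k)
    (hR : local_resk R) (t : R -> S -> B) (A : comPzRingType) (iota : B -> A) :
  is_tensor_alg t -> is_localization (mideal t) iota ->
  exists pi : A -> S, is_rhom pi /\ forall s, pi (iota (t 1 s)) = s.
Proof.
move=> ht [_ [_ iotaUP]].
have [psi [psi_lin psi_t]] := residue_tensor_exists hR ht.
have [pi [pi_rhom [pi_iota _]]] := iotaUP S psi (residue_tensor_rhom ht psi_lin psi_t)
  (residue_tensor_unit ht psi_lin psi_t).
by exists pi; split=> // s; rewrite pi_iota psi_t residue1 scale1r.
Qed.

Section FreeSummandDescent.
Variables (k : fieldType) (R S B : comAlgType k) (hS : local_resk S) (t : R -> S -> B).
Hypothesis ht : is_tensor_alg t.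
Variables (M : lmodType R) (N : lmodType S) (Q : lmodType B) (tau : M -> N -> Q).
Hypothesis htau : is_tensor_mod t tau.
Variables (A : comPzRingType) (iota : B -> A) (P : lmodType A) (lambda : Q -> P).
Hypothesis hlambda : is_mod_localization iota lambda.
Variable pi : A -> S.
Hypotheses (pi_rhom : is_rhom pi) (pi_t1 : forall s, pi (iota (t 1 s)) = s).
Variable g : P -> A.
Hypothesis g_lin : scalar g.

Let lambda_lin : linear_for (fun b p => iota b *: p) lambda := proj1 hlambda.

Lemma tensor_restriction_scalar x : scalar (fun y => pi (g (lambda (tau x y)))).
Proof.
case: pi_rhom => _ [piD piM] a y y' /=.
by rewrite (tensor_mod_linearr x htau) lambda_lin g_lin piD piM pi_t1.
Qed.

Lemma residue_split_map_eq0 : ~ has_free_summand N -> forall p, residue hS (pi (g p)) = 0.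
Proof.
case: pi_rhom => _ [piD piM] noN.
have chi_tau x y : residue hS (pi (g (lambda (tau x y)))) = 0.
  apply: residue_nonunit => unit_xy; apply: noN.
  exact: free_summand_of_unit_value (tensor_restriction_scalar x) unit_xy.
have chi_Q : forall q, residue hS (pi (g (lambda q))) = 0.
  apply: (tensor_mod_ext (W := k^o) (H1 := fun q => residue hS (pi (g (lambda q))))
                         (H2 := fun _ => 0) htau) => // c q1 q2 /=.
    rewrite lambda_lin g_lin piD piM (tensor_alg_alg ht) pi_t1 residueD residueM.
    by rewrite residue_alg.
  by rewrite scaler0 addr0.
apply: (mod_localization_ind hlambda) => // a p1 p2 chi_p1 chi_p2.
by rewrite g_lin piD piM residueD residueM chi_p1 chi_p2 mulr0 addr0.
Qed.

End FreeSummandDescent.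

Lemma has_free_summand_tensor_localizationr (k : fieldType) (R S : comAlgType k)
  (hR : local_resk R) (hS : local_resk S)
  (M : lmodType R) (N : lmodType S)
  (B : comAlgType k) (t : R -> S -> B) (ht : is_tensor_alg t)
  (A : comPzRingType) (iota : B -> A) (hiota : is_localization (mideal t) iota)
  (Q : lmodType B) (tau : M -> N -> Q) (htau : is_tensor_mod t tau)
  (P : lmodType A) (lambda : Q -> P) (hlambda : is_mod_localization iota lambda) :
  has_free_summand P -> has_free_summand N.
Proof.
case=> f [g [_ [g_lin gf]]]; apply: NNPP => noN.
have [pi [pi_rhom pi_t1]] := residue_localization_exists hR ht hiota.
have := residue_split_map_eq0 hS ht htau hlambda pi_rhom pi_t1 g_lin noN (f 1).
by rewrite gf (proj1 pi_rhom) residue1 => /eqP; rewrite oner_eq0.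
Qed.

Theorem lemma6p5 (k : fieldType) (R S : comAlgType k)
  (hR : local_resk R) (hS : local_resk S)
  (M : lmodType R) (N : lmodType S)
  (B : comAlgType k) (t : R -> S -> B) (ht : is_tensor_alg t)
  (A : comPzRingType) (iota : B -> A) (hiota : is_localization (mideal t) iota)
  (Q : lmodType B) (tau : M -> N -> Q) (htau : is_tensor_mod t tau)
  (P : lmodType A) (lambda : Q -> P) (hlambda : is_mod_localization iota lambda) :
  has_free_summand P -> has_free_summand M /\ has_free_summand N.
Proof.
move=> hP; split; last first.
  exact: (has_free_summand_tensor_localizationr hR hS ht hiota htau hlambda hP).
exact: (has_free_summand_tensor_localizationr hS hR (is_tensor_alg_swap ht)
  (is_localization_swap hiota) (is_tensor_mod_swap htau) hlambda hP).
Qed.
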